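(* Let $M$ be a finite abelian group of order $m$, $J\colon M\times M\to\mathbf{C}$, and $i\colon\hat{M}\to\hat{M}$ a bijection with $i(x)=x\,i(x^{-1})$ for all $x$, such that $J(\alpha,\beta)=\frac{1}{m}\sum_{x\in\hat{M}}\alpha(i(x))\beta(i(x)x^{-1})$ for all $\alpha,\beta\in M$. Define $x\oplus y=x\,i(x/y)^{-1}$ for $x,y\in\hat{M}$. Then \[ J(\alpha,\beta)=\frac{1}{m}\sum_{\substack{x\oplus y=1,\\ x,y\in\hat{M}}}\alpha(x)\beta(y)\quad\text{for all }\alpha,\beta\in M. \]
   Context: $\hat{M}$ is the Pontryagin dual of $M$, written multiplicatively with identity $1$; for $\alpha\in M$, $x\in\hat{M}$, $\alpha(x)$ is the value of the character $x$ at $\alpha$. (In the paper, $J$ is a Jacobi function, but this is not used.) *)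

From HB Require Import structures.
From mathcomp Require Import all_boot all_order all_algebra all_fingroup.
Set Implicit Arguments. Unset Strict Implicit. Unset Printing Implicit Defensive.
Import GRing.Theory Num.Theory.
Local Open Scope ring_scope.

(* The Pontryagin dual of the finite abelian group M is modelled as a finite
   group D together with a pairing e : M -> D -> C, e a x = "a(x)", such that
   x |-> e _ x is a group isomorphism from D onto Hom(M, C^x). *)
Definition is_dual_pairing (C : numClosedFieldType) (M D : finGroupType)
  (e : M -> D -> C) : Prop :=
  [/\ (forall a x, e a x != 0),
      (forall a b x, e (a * b)%g x = e a x * e b x),
      (forall a x y, e a (x * y)%g = e a x * e a y),
      (forall x y, (forall a, e a x = e a y) -> x = y) &
      (forall chi : M -> C, (forall a b, chi (a * b)%g = chi a * chi b) ->
         (forall a, chi a != 0) -> exists x, forall a, e a x = chi a)].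

Definition dual_oplus (D : finGroupType) (i : D -> D) (x y : D) : D :=
  (x * (i (x * y^-1))^-1)%g.

From HB Require Import structures.
From mathcomp Require Import all_boot all_order all_algebra all_fingroup.
Import GRing.Theory Num.Theory.
Local Open Scope ring_scope.

(* Since x (+) y = 1 means exactly x = i(x/y), the map z |-> (i z, i z / z)
   is a bijection from the dual group onto the solutions of x (+) y = 1, with
   inverse (x, y) |-> x/y; this uses only that the dual group is abelian.
   Reindexing the defining sum of J along it gives the claim. *)

Lemma dual_pairing_commute (C : numClosedFieldType) (M D : finGroupType)
    (e : M -> D -> C) :
  is_dual_pairing e -> forall x y : D, commute x y.
Proof.
by case=> _ _ emul einj _ x y; apply: einj => a; rewrite !emul mulrC.
Qed.

Lemma dual_oplus_eq1 (D : finGroupType) (i : D -> D) (x y : D) :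
  (dual_oplus i x y == 1%g) = (i (x * y^-1)%g == x).
Proof. by rewrite /dual_oplus -eq_mulgV1 eq_sym. Qed.

Lemma sum_dual_oplus_eq1 (R : nmodType) (D : finGroupType) (i : D -> D)
    (F : D -> D -> R) :
  (forall x y : D, commute x y) ->
  \sum_(p : D * D | dual_oplus i p.1 p.2 == 1%g) F p.1 p.2 =
    \sum_(z : D) F (i z) (i z * z^-1)%g.
Proof.
move=> comm.
have divK (x z : D) : (x * (x * z^-1)^-1)%g = z.
  by rewrite invMg invgK mulgA [(x * z)%g]comm mulgK.
rewrite (reindex_onto (fun z => (i z, i z * z^-1)%g) (fun p => p.1 * p.2^-1)%g).
  by apply: eq_bigl => z /=; rewrite dual_oplus_eq1 !divK !eqxx.
case=> x y; rewrite dual_oplus_eq1 /= => /eqP ix.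
by rewrite ix divK.
Qed.

Theorem mainTheorem15 (C : numClosedFieldType) (M D : finGroupType)
  (e : M -> D -> C) (J : M -> M -> C) (i : D -> D) :
  abelian [set: M] ->
  is_dual_pairing e ->
  bijective i ->
  (forall x : D, i x = (x * i (x^-1))%g) ->
  (forall alpha beta : M,
     J alpha beta = (#|M|%:R)^-1 *
       \sum_(x : D) e alpha (i x) * e beta (i x * x^-1)%g) ->
  forall alpha beta : M,
    J alpha beta = (#|M|%:R)^-1 *
      \sum_(p : D * D | dual_oplus i p.1 p.2 == 1%g) e alpha p.1 * e beta p.2.
Proof.
move=> _ dualD _ _ defJ alpha beta.
rewrite defJ (sum_dual_oplus_eq1 _ _ i (fun x y => e alpha x * e beta y)) //.
exact: dual_pairing_commute dualD.
Qed.
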